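(* Let $c:S^1\to\mathbb{C}$ be a $\mathcal{C}^1$-embedding with image $\Gamma$, and let $F:V\to\mathrm{Tri}$ be the map $F(s_0,s_1,s_2)=[(c(s_0),c(s_1),c(s_2))]$. A point $(s_0,s_1,s_2)\in V$ is a critical point of $F$ (i.e. the tangent map of $F$ at that point is not surjective) if and only if the three tangent lines to $\Gamma$ at $c(s_0),c(s_1),c(s_2)$ are either all parallel or concurrent (all pass through a common point).
   Context: Identify the plane with $\mathbb{C}$. $\mathrm{Tri}$ is the smooth 3-manifold $\big(\mathbb{C}^2\setminus\{(0,0)\}\big)/\mathbb{R}_{>0}$, where a triple $(z_0,z_1,z_2)\in\mathbb{C}^3$ not of the form $(z,z,z)$ is sent to the class $[(z_0,z_1,z_2)]$ of $(z_1-z_0,z_2-z_0)$ under scalar multiplication by positive reals; thus $\mathrm{Tri}$ is the space of triangles modulo translations and positive homotheties. $V=(S^1)^3\setminus\{(s,s,s):s\in S^1\}$. A $\mathcal{C}^1$-embedding is an injective $\mathcal{C}^1$-immersion. The tangent line to $\Gamma$ at $c(s)$ is $c(s)+\mathbb{R}\,\dot c(s)$. *)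

From Stdlib Require Import Reals Lra ZArith.
Open Scope R_scope.

(* The plane C is identified with R^2; a curve c : S^1 -> C is given by its
   two real coordinate functions x, y : R -> R, 1-periodic (S^1 = R/Z). *)

Definition C1_embedding (x y dx dy : R -> R) : Prop :=
  (forall t, x (t + 1) = x t /\ y (t + 1) = y t) /\
  (forall t, derivable_pt_lim x t (dx t) /\ derivable_pt_lim y t (dy t)) /\
  (forall t, continuity_pt dx t /\ continuity_pt dy t) /\
  (forall t, dx t <> 0 \/ dy t <> 0) /\
  (forall s t, x s = x t -> y s = y t -> exists k : Z, s = t + IZR k).

(* (s0,s1,s2) (lifted to R^3) lies in V = (S^1)^3 minus the diagonal. *)
Definition in_V (s0 s1 s2 : R) : Prop :=
  ~ (exists k1 k2 : Z, s1 = s0 + IZR k1 /\ s2 = s0 + IZR k2).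

(* The representative (c(s1)-c(s0), c(s2)-c(s0)) in C^2 = R^4,
   coordinates k = 0,1,2,3. *)
Definition Gc (x y : R -> R) (s0 s1 s2 : R) (k : nat) : R :=
  match k with
  | 0%nat => x s1 - x s0
  | 1%nat => y s1 - y s0
  | 2%nat => x s2 - x s0
  | _ => y s2 - y s0
  end.

Definition Gnorm (x y : R -> R) (s0 s1 s2 : R) : R :=
  sqrt (Gc x y s0 s1 s2 0 ^ 2 + Gc x y s0 s1 s2 1 ^ 2
        + Gc x y s0 s1 s2 2 ^ 2 + Gc x y s0 s1 s2 3 ^ 2).

(* Tri = (C^2 \ 0)/R_{>0} is identified with the unit sphere S^3 in R^4
   via [w] |-> w/|w|.  F in this model: *)
Definition Fsph (x y : R -> R) (s0 s1 s2 : R) (k : nat) : R :=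
  Gc x y s0 s1 s2 k / Gnorm x y s0 s1 s2.

Definition is_partials (x y : R -> R) (s0 s1 s2 : R) (D : nat -> nat -> R)
  : Prop :=
  forall k, (k < 4)%nat ->
    derivable_pt_lim (fun t => Fsph x y t s1 s2 k) s0 (D 0%nat k) /\
    derivable_pt_lim (fun t => Fsph x y s0 t s2 k) s1 (D 1%nat k) /\
    derivable_pt_lim (fun t => Fsph x y s0 s1 t k) s2 (D 2%nat k).

(* Critical point: the tangent map dF : R^3 -> T_{F(s)} S^3 = F(s)^perp,
   (a0,a1,a2) |-> sum_i a_i D i, is not surjective. *)
Definition critical (x y : R -> R) (s0 s1 s2 : R) (D : nat -> nat -> R)
  : Prop :=
  exists v : nat -> R,
    v 0%nat * Fsph x y s0 s1 s2 0 + v 1%nat * Fsph x y s0 s1 s2 1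
    + v 2%nat * Fsph x y s0 s1 s2 2 + v 3%nat * Fsph x y s0 s1 s2 3 = 0 /\
    forall a0 a1 a2 : R,
      ~ (forall k, (k < 4)%nat ->
           a0 * D 0%nat k + a1 * D 1%nat k + a2 * D 2%nat k = v k).

Definition tangents_parallel (dx dy : R -> R) (s0 s1 s2 : R) : Prop :=
  dx s0 * dy s1 - dy s0 * dx s1 = 0 /\
  dx s0 * dy s2 - dy s0 * dx s2 = 0 /\
  dx s1 * dy s2 - dy s1 * dx s2 = 0.

Definition tangents_concurrent (x y dx dy : R -> R) (s0 s1 s2 : R) : Prop :=
  exists px py t0 t1 t2 : R,
    px = x s0 + t0 * dx s0 /\ py = y s0 + t0 * dy s0 /\
    px = x s1 + t1 * dx s1 /\ py = y s1 + t1 * dy s1 /\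
    px = x s2 + t2 * dx s2 /\ py = y s2 + t2 * dy s2.

(* Write G(s) = (c(s1)-c(s0), c(s2)-c(s0)) in R^4, so that F = G/|G| in the
   model of Tri as the unit sphere S^3.  On V the vector G is nonzero, and
   the partial derivatives of F are the components of dG/ds_i orthogonal to
   G, divided by |G|.  Hence dF is onto the tangent space G^perp of S^3
   exactly when the four vectors G, dG/ds0, dG/ds1, dG/ds2 span R^4, i.e. the
   point is critical iff these four rows are linearly dependent.  A linear
   relation c0 G + c1 dG/ds0 + c2 dG/ds1 + c3 dG/ds2 = 0 reads
   c0 (c(s_j) - c(s0)) = c1 c'(s0) - c_{j+1} c'(s_j)  (j = 1, 2):
   if c0 <> 0 the tangent lines meet at c(s0) + (c1/c0) c'(s0), and if c0 = 0
   the tangent directions are pairwise proportional. *)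

From Stdlib Require Import Reals ZArith Lra Lia Classical.
Open Scope R_scope.

Definition dot4 (u v : nat -> R) : R :=
  u 0%nat * v 0%nat + u 1%nat * v 1%nat + u 2%nat * v 2%nat + u 3%nat * v 3%nat.

Definition sqnorm4 (u : nat -> R) : R :=
  u 0%nat ^ 2 + u 1%nat ^ 2 + u 2%nat ^ 2 + u 3%nat ^ 2.

Definition comb4 (c : nat -> R) (r : nat -> nat -> R) (k : nat) : R :=
  c 0%nat * r 0%nat k + c 1%nat * r 1%nat k + c 2%nat * r 2%nat k + c 3%nat * r 3%nat k.

Definition nonzero4 (c : nat -> R) : Prop :=
  c 0%nat <> 0 \/ c 1%nat <> 0 \/ c 2%nat <> 0 \/ c 3%nat <> 0.

Definition dep4 (r : nat -> nat -> R) : Prop :=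
  exists c, nonzero4 c /\ forall k, (k < 4)%nat -> comb4 c r k = 0.

Definition spans4 (r : nat -> nat -> R) : Prop :=
  forall t : nat -> R, exists c, forall k, (k < 4)%nat -> comb4 c r k = t k.

Lemma sqnorm4_nonpos_zero (u : nat -> R) :
  sqnorm4 u <= 0 -> u 0%nat = 0 /\ u 1%nat = 0 /\ u 2%nat = 0 /\ u 3%nat = 0.
Proof.
unfold sqnorm4; intros H.
pose proof (pow2_ge_0 (u 0%nat)); pose proof (pow2_ge_0 (u 1%nat)).
pose proof (pow2_ge_0 (u 2%nat)); pose proof (pow2_ge_0 (u 3%nat)).
repeat split; apply Rsqr_eq_0; unfold Rsqr; nra.
Qed.

Lemma nonzero4_dot4_pos (w : nat -> R) : nonzero4 w -> 0 < dot4 w w.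
Proof. unfold dot4; intros [H | [H | [H | H]]]; nra. Qed.

Lemma dot4_ext (u u' w : nat -> R) :
  (forall k, (k < 4)%nat -> u k = u' k) -> dot4 u w = dot4 u' w.
Proof. intros H; unfold dot4; rewrite !H by lia; reflexivity. Qed.

Lemma dot4_comb3 (a0 a1 a2 : R) (u0 u1 u2 w : nat -> R) :
  dot4 (fun k => a0 * u0 k + a1 * u1 k + a2 * u2 k) w
  = a0 * dot4 u0 w + a1 * dot4 u1 w + a2 * dot4 u2 w.
Proof. unfold dot4; ring. Qed.

From mathcomp Require all_boot all_algebra Rstruct.

Module Matrix4.
Import all_boot all_algebra Rstruct.
Import GRing.Theory.
Local Open Scope ring_scope.

Definition mx_of (r : nat -> nat -> R) : 'M[R]_4 := \matrix_(i < 4, j < 4) r i j.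

Lemma sum_ord4 (f : 'I_4 -> R) :
  \sum_(i < 4) f i = f (inord 0) + f (inord 1) + f (inord 2) + f (inord 3).
Proof.
rewrite !big_ord_recl big_ord0 addr0 !addrA.
by congr (_ + _ + _ + _); congr f; apply: val_inj; rewrite /= inordK.
Qed.

Lemma ord4_cases (j : 'I_4) : j = inord 0 \/ j = inord 1 \/ j = inord 2 \/ j = inord 3.
Proof.
have E : j = inord j by apply: val_inj; rewrite /= inordK.
case: j E => [[|[|[|[|n]]]] Hn] E /=; rewrite E;
  by [left | right; left | right; right; left | right; right; right |].
Qed.

Lemma comb4_mulmx (c : nat -> R) (r : nat -> nat -> R) (k : nat) : (k < 4)%N ->
  ((\row_(i < 4) c i) *m mx_of r) 0 (inord k) = comb4 c r k.
Proof.
move=> Hk; rewrite !mxE sum_ord4 !mxE !inordK //.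
Qed.

Lemma row_nonzero4 (v : 'rV[R]_4) : v != 0 -> nonzero4 (fun i => v 0 (inord i)).
Proof.
move=> Hv; rewrite /nonzero4.
case: (Req_dec (v 0 (inord 0)) 0%R) => H0; last by left.
case: (Req_dec (v 0 (inord 1)) 0%R) => H1; last by right; left.
case: (Req_dec (v 0 (inord 2)) 0%R) => H2; last by right; right; left.
case: (Req_dec (v 0 (inord 3)) 0%R) => H3; last by right; right; right.
exfalso; move/eqP: Hv; apply; apply/rowP => j; rewrite mxE.
by have [-> | [-> | [-> | ->]]] := ord4_cases j.
Qed.

Lemma dep4_det (r : nat -> nat -> R) : dep4 r <-> \det (mx_of r) = 0.
Proof.
split.
- move=> [c [Hc Hk]]; apply/eqP/det0P.
  exists (\row_(i < 4) c i).
    apply/eqP => /rowP H.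
    have H0 := H (inord 0); have H1 := H (inord 1).
    have H2 := H (inord 2); have H3 := H (inord 3).
    rewrite !mxE !inordK // in H0 H1 H2 H3.
    by case: Hc => [X | [X | [X | X]]]; apply: X.
  apply/rowP => j; rewrite [RHS]mxE.
  have [-> | [-> | [-> | ->]]] := ord4_cases j; rewrite comb4_mulmx //; by apply: Hk; apply/ltP.
- move/eqP/det0P => [v Hv Hm].
  exists (fun i => v 0 (inord i)); split; first exact: row_nonzero4.
  move=> k /ltP Hk; rewrite -comb4_mulmx //.
  have -> : \row_(i < 4) v 0 (inord i) = v.
    by apply/rowP => j; rewrite mxE; congr (v 0 _); apply: val_inj; rewrite /= inordK.
  by rewrite Hm mxE.
Qed.

(* Row dependence implies column dependence: some nonzero vector is
   orthogonal to every row. *)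
Lemma dep4_transpose (r : nat -> nat -> R) : dep4 r -> dep4 (fun i j => r j i).
Proof.
move/dep4_det => H; apply/dep4_det.
have -> : mx_of (fun i j => r j i) = (mx_of r)^T by apply/matrixP => i j; rewrite !mxE.
by rewrite det_tr.
Qed.

Lemma spans4_of_indep (r : nat -> nat -> R) : ~ dep4 r -> spans4 r.
Proof.
move=> Hn t.
have Hu : mx_of r \in unitmx.
  by rewrite unitmxE unitfE; apply/eqP => H; apply: Hn; apply/dep4_det.
set u : 'rV[R]_4 := (\row_(k < 4) t k) *m invmx (mx_of r).
exists (fun i => u 0 (inord i)) => k Hk.
have Hk4 : (k < 4)%N by apply/ltP.
rewrite -comb4_mulmx //.
have -> : \row_(i < 4) u 0 (inord i) = u.
  by apply/rowP => j; rewrite mxE; congr (u 0 _); apply: val_inj; rewrite /= inordK.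
by rewrite mulmxKV // mxE inordK.
Qed.
End Matrix4.

Lemma derivable_pt_lim_square (f : R -> R) (t l : R) :
  derivable_pt_lim f t l -> derivable_pt_lim (fun s => f s ^ 2) t (2 * f t * l).
Proof.
intros Hf.
replace (2 * f t * l) with (l * f t + f t * l) by ring.
apply (derivable_pt_lim_ext (fun s => f s * f s)); [intro s; ring |].
apply derivable_pt_lim_mult; exact Hf.
Qed.

Lemma derivable_pt_lim_sqnorm4 (g : R -> nat -> R) (dg : nat -> R) (t : R) :
  (forall j, (j < 4)%nat -> derivable_pt_lim (fun s => g s j) t (dg j)) ->
  derivable_pt_lim (fun s => sqnorm4 (g s)) t (2 * dot4 (g t) dg).
Proof.
intros Hg.
replace (2 * dot4 (g t) dg) with
  (2 * g t 0%nat * dg 0%nat + 2 * g t 1%nat * dg 1%nat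
   + 2 * g t 2%nat * dg 2%nat + 2 * g t 3%nat * dg 3%nat) by (unfold dot4; ring).
unfold sqnorm4.
repeat apply derivable_pt_lim_plus; apply derivable_pt_lim_square, Hg; lia.
Qed.

(* Derivative of a coordinate of the normalized vector g/|g|: the component
   of g' orthogonal to g, divided by |g|. *)
Lemma derivable_pt_lim_normalized (g : R -> nat -> R) (dg : nat -> R) (t : R) (k : nat) :
  (forall j, (j < 4)%nat -> derivable_pt_lim (fun s => g s j) t (dg j)) ->
  0 < sqnorm4 (g t) -> (k < 4)%nat ->
  derivable_pt_lim (fun s => g s k / sqrt (sqnorm4 (g s))) t
    ((dg k - dot4 (g t) dg / sqnorm4 (g t) * g t k) / sqrt (sqnorm4 (g t))).
Proof.
intros Hg Hpos Hk.
set (Q := sqnorm4 (g t)) in *.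
assert (HN : 0 < sqrt Q) by (apply sqrt_lt_R0; exact Hpos).
assert (HNN : sqrt Q * sqrt Q = Q) by (apply sqrt_sqrt; lra).
assert (Hsqrt : derivable_pt_lim (fun s => sqrt (sqnorm4 (g s))) t
                  (/ (2 * sqrt Q) * (2 * dot4 (g t) dg))).
{ apply (derivable_pt_lim_comp (fun s => sqnorm4 (g s)) sqrt).
  - exact (derivable_pt_lim_sqnorm4 g dg t Hg).
  - apply derivable_pt_lim_sqrt; exact Hpos. }
pose proof (derivable_pt_lim_div (fun s => g s k) _ t _ _ (Hg k Hk) Hsqrt
              (Rgt_not_eq _ _ HN)) as Hdiv.
match goal with |- derivable_pt_lim _ _ ?L => replace L with
  ((dg k * sqrt Q - / (2 * sqrt Q) * (2 * dot4 (g t) dg) * g t k) / Rsqr (sqrt Q)) end.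
- exact Hdiv.
- unfold Rsqr. set (N := sqrt Q) in *.
  replace (dot4 (g t) dg / Q) with (dot4 (g t) dg / (N * N)) by (rewrite HNN; reflexivity).
  field. lra.
Qed.

Lemma derivable_pt_lim_const_minus (f : R -> R) (a t l : R) :
  derivable_pt_lim f t l -> derivable_pt_lim (fun s => a - f s) t (- l).
Proof.
intros Hf. replace (- l) with (0 - l) by ring.
apply (derivable_pt_lim_minus (fun _ => a) f); [apply derivable_pt_lim_const | exact Hf].
Qed.

Lemma derivable_pt_lim_minus_const (f : R -> R) (a t l : R) :
  derivable_pt_lim f t l -> derivable_pt_lim (fun s => f s - a) t l.
Proof.
intros Hf. replace l with (l - 0) by ring.
apply (derivable_pt_lim_minus f (fun _ => a)); [exact Hf | apply derivable_pt_lim_const].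
Qed.

(* The rows r_1, r_2, r_3 are the
   partial derivatives of a map into R^4 \ 0 whose value is r_0, and
   D_0, D_1, D_2 are the partial derivatives of its normalization: the
   components of r_1, r_2, r_3 orthogonal to r_0, divided by |r_0|. *)
Section NormalizedTangentMap.
Variables (r D : nat -> nat -> R).
Hypothesis base_pos : 0 < sqnorm4 (r 0%nat).
Hypothesis D_proj : forall i k, (i < 3)%nat -> (k < 4)%nat ->
  D i k = (r (S i) k - dot4 (r 0%nat) (r (S i)) / sqnorm4 (r 0%nat) * r 0%nat k)
          / sqrt (sqnorm4 (r 0%nat)).

Let N := sqrt (sqnorm4 (r 0%nat)).

Lemma norm_base_pos : 0 < N.
Proof. apply sqrt_lt_R0; exact base_pos. Qed.

(* If the rows are independent, the three partials span the tangent space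
   r_0^perp of the sphere: write v = sum c_i r_i and project on r_0^perp. *)
Lemma partials_span_of_indep : ~ dep4 r ->
  forall v, dot4 v (r 0%nat) = 0 ->
  exists a0 a1 a2, forall k, (k < 4)%nat -> a0 * D 0%nat k + a1 * D 1%nat k + a2 * D 2%nat k = v k.
Proof.
intros Hindep v Hv.
destruct (Matrix4.spans4_of_indep r Hindep v) as [c Hc].
set (Q := sqnorm4 (r 0%nat)) in *.
(* The orthogonality v.r_0 = 0 determines c_0 from c_1, c_2, c_3. *)
assert (Hc0 : c 0%nat = - (c 1%nat * dot4 (r 0%nat) (r 1%nat)
   + c 2%nat * dot4 (r 0%nat) (r 2%nat) + c 3%nat * dot4 (r 0%nat) (r 3%nat)) / Q).
{ unfold dot4 in Hv.
  rewrite <- (Hc 0%nat), <- (Hc 1%nat), <- (Hc 2%nat), <- (Hc 3%nat) in Hv by lia.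
  apply (Rmult_eq_reg_r Q); [| lra].
  unfold Q, sqnorm4, comb4, dot4 in *. field_simplify; lra. }
pose proof norm_base_pos as HN.
exists (c 1%nat * N), (c 2%nat * N), (c 3%nat * N). intros k Hk.
rewrite !D_proj by lia. rewrite <- (Hc k Hk). unfold comb4. rewrite Hc0.
fold N. field. split; lra.
Qed.

Lemma partials_orthogonal (w : nat -> R) :
  (forall i, (i < 4)%nat -> dot4 (r i) w = 0) ->
  forall i, (i < 3)%nat -> dot4 (D i) w = 0.
Proof.
intros Hw i Hi.
pose proof norm_base_pos as HN.
assert (E : dot4 (D i) w = (dot4 (r (S i)) w
          - dot4 (r 0%nat) (r (S i)) / sqnorm4 (r 0%nat) * dot4 (r 0%nat) w) / N).
{ unfold dot4 at 1; rewrite !D_proj by lia. fold N. unfold dot4. field. split; lra. }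
rewrite E, !Hw by lia. field. lra.
Qed.

(* If the rows are dependent, a nonzero vector orthogonal to all of them is
   tangent to the sphere at the base point but is not a combination of the
   partials. *)
Lemma partials_miss_of_dep : dep4 r ->
  exists v, dot4 v (fun k => r 0%nat k / N) = 0 /\
  (forall a0 a1 a2 : R, ~ (forall k, (k < 4)%nat ->
    a0 * D 0%nat k + a1 * D 1%nat k + a2 * D 2%nat k = v k)).
Proof.
intros Hdep.
destruct (Matrix4.dep4_transpose r Hdep) as [w [Hw Hcol]].
assert (Horth : forall i, (i < 4)%nat -> dot4 (r i) w = 0).
{ intros i Hi. rewrite <- (Hcol i Hi). unfold dot4, comb4. ring. }
pose proof norm_base_pos as HN.
exists w; split.
- transitivity (dot4 (r 0%nat) w / N).
  + unfold dot4. field. lra.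
  + rewrite Horth by lia. field. lra.
- intros a0 a1 a2 Ha.
  assert (Hww : dot4 w w = 0).
  { rewrite (dot4_ext w (fun k => a0 * D 0%nat k + a1 * D 1%nat k + a2 * D 2%nat k))
      by (intros k Hk; symmetry; apply Ha; exact Hk).
    rewrite dot4_comb3, !(partials_orthogonal w Horth) by lia. ring. }
  pose proof (nonzero4_dot4_pos w Hw). lra.
Qed.

Lemma partials_miss_iff_dep :
  (exists v, dot4 v (fun k => r 0%nat k / N) = 0 /\
    (forall a0 a1 a2 : R, ~ (forall k, (k < 4)%nat ->
      a0 * D 0%nat k + a1 * D 1%nat k + a2 * D 2%nat k = v k))) <-> dep4 r.
Proof.
split; [| exact partials_miss_of_dep].
intros [v [Hv Hmiss]].
destruct (classic (dep4 r)) as [Hdep | Hindep]; [exact Hdep | exfalso].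
pose proof norm_base_pos as HN.
assert (Hv0 : dot4 v (r 0%nat) = 0).
{ transitivity (N * dot4 v (fun k => r 0%nat k / N)).
  + unfold dot4. field. lra.
  + rewrite Hv. ring. }
destruct (partials_span_of_indep Hindep v Hv0) as [a0 [a1 [a2 Ha]]].
exact (Hmiss a0 a1 a2 Ha).
Qed.
End NormalizedTangentMap.

(* Row 0 is the representative G = (c(s1)-c(s0), c(s2)-c(s0)) of F, rows 1-3
   are its partial derivatives in s0, s1, s2. *)
Definition curve_rows (x y dx dy : R -> R) (s0 s1 s2 : R) (i k : nat) : R :=
  match i, k with
  | 0%nat, _ => Gc x y s0 s1 s2 k
  | 1%nat, (0 | 2)%nat => - dx s0
  | 1%nat, _ => - dy s0
  | 2%nat, 0%nat => dx s1
  | 2%nat, 1%nat => dy s1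
  | 2%nat, _ => 0
  | _, 2%nat => dx s2
  | _, 3%nat => dy s2
  | _, _ => 0
  end.

(* On V the representative G is nonzero, by injectivity of c modulo 1. *)
Lemma Gc_sqnorm_pos (x y : R -> R) (s0 s1 s2 : R) :
  (forall s t, x s = x t -> y s = y t -> exists k : Z, s = t + IZR k) ->
  in_V s0 s1 s2 -> 0 < sqnorm4 (Gc x y s0 s1 s2).
Proof.
intros Hinj HV.
destruct (Rlt_or_le 0 (sqnorm4 (Gc x y s0 s1 s2))) as [Hpos | Hle]; [exact Hpos | exfalso].
destruct (sqnorm4_nonpos_zero _ Hle) as [E0 [E1 [E2 E3]]]. unfold Gc in E0, E1, E2, E3.
assert (Ex1 : x s1 = x s0) by lra. assert (Ey1 : y s1 = y s0) by lra.
assert (Ex2 : x s2 = x s0) by lra. assert (Ey2 : y s2 = y s0) by lra.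
destruct (Hinj s1 s0 Ex1 Ey1) as [k1 K1]. destruct (Hinj s2 s0 Ex2 Ey2) as [k2 K2].
apply HV. exists k1, k2. split; assumption.
Qed.

Lemma Gc_partials (x y dx dy : R -> R) (s0 s1 s2 : R) (j : nat) :
  (forall t, derivable_pt_lim x t (dx t) /\ derivable_pt_lim y t (dy t)) ->
  (j < 4)%nat ->
  derivable_pt_lim (fun t => Gc x y t s1 s2 j) s0 (curve_rows x y dx dy s0 s1 s2 1 j) /\
  derivable_pt_lim (fun t => Gc x y s0 t s2 j) s1 (curve_rows x y dx dy s0 s1 s2 2 j) /\
  derivable_pt_lim (fun t => Gc x y s0 s1 t j) s2 (curve_rows x y dx dy s0 s1 s2 3 j).
Proof.
intros Hder Hj.
destruct j as [|[|[|[|j]]]]; [| | | | lia]; simpl; repeat split;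
  first [ apply derivable_pt_lim_const_minus, Hder
        | apply derivable_pt_lim_minus_const, Hder
        | apply derivable_pt_lim_const ].
Qed.

Lemma partials_formula (x y dx dy : R -> R) (s0 s1 s2 : R) (D : nat -> nat -> R) :
  (forall t, derivable_pt_lim x t (dx t) /\ derivable_pt_lim y t (dy t)) ->
  0 < sqnorm4 (Gc x y s0 s1 s2) ->
  is_partials x y s0 s1 s2 D ->
  let r := curve_rows x y dx dy s0 s1 s2 in
  forall i k, (i < 3)%nat -> (k < 4)%nat ->
  D i k = (r (S i) k - dot4 (r 0%nat) (r (S i)) / sqnorm4 (r 0%nat) * r 0%nat k)
          / sqrt (sqnorm4 (r 0%nat)).
Proof.
intros Hder Hpos HP r i k Hi Hk.
destruct (HP k Hk) as [P0 [P1 P2]].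
destruct i as [|[|[|i]]]; [| | | lia].
- apply (uniqueness_limite _ s0 _ _ P0).
  apply (derivable_pt_lim_normalized (fun t => Gc x y t s1 s2)); try assumption.
  intros j Hj; apply (Gc_partials x y dx dy s0 s1 s2 j Hder Hj).
- apply (uniqueness_limite _ s1 _ _ P1).
  apply (derivable_pt_lim_normalized (fun t => Gc x y s0 t s2)); try assumption.
  intros j Hj; apply (Gc_partials x y dx dy s0 s1 s2 j Hder Hj).
- apply (uniqueness_limite _ s2 _ _ P2).
  apply (derivable_pt_lim_normalized (fun t => Gc x y s0 s1 t)); try assumption.
  intros j Hj; apply (Gc_partials x y dx dy s0 s1 s2 j Hder Hj).
Qed.

Lemma critical_iff_rows_dependent (x y dx dy : R -> R) (s0 s1 s2 : R) (D : nat -> nat -> R) :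
  (forall t, derivable_pt_lim x t (dx t) /\ derivable_pt_lim y t (dy t)) ->
  0 < sqnorm4 (Gc x y s0 s1 s2) ->
  is_partials x y s0 s1 s2 D ->
  (critical x y s0 s1 s2 D <-> dep4 (curve_rows x y dx dy s0 s1 s2)).
Proof.
intros Hder Hpos HP.
exact (partials_miss_iff_dep _ D Hpos (partials_formula x y dx dy s0 s1 s2 D Hder Hpos HP)).
Qed.

Lemma proportional_parallel (a b U V U' V' : R) :
  a <> 0 -> a * U = b * U' -> a * V = b * V' -> U * V' - V * U' = 0.
Proof.
intros Ha HU HV.
apply (Rmult_eq_reg_l a); [| exact Ha].
transitivity (V' * (a * U) - U' * (a * V)); [ring |].
rewrite HU, HV; ring.
Qed.

Lemma proportional_nonzero (a b U V U' V' : R) :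
  (U <> 0 \/ V <> 0) -> a <> 0 -> a * U = b * U' -> a * V = b * V' -> b <> 0.
Proof.
intros Hu Ha HU HV Hb. rewrite Hb, Rmult_0_l in HU, HV.
destruct Hu as [Hu | Hv]; [apply Hu | apply Hv];
  [destruct (Rmult_integral _ _ HU) | destruct (Rmult_integral _ _ HV)]; tauto.
Qed.

Lemma parallel_multiple (U V U' V' : R) :
  (U <> 0 \/ V <> 0) -> U * V' - V * U' = 0 -> exists l, U' = l * U /\ V' = l * V.
Proof.
intros Hu Hpar.
assert (Hn : 0 < U * U + V * V) by (destruct Hu; nra).
set (n := U * U + V * V) in *.
set (p := U * U' + V * V').
assert (EU : U' * n = p * U).
{ transitivity (U * p - V * (U * V' - V * U')); [unfold n, p; ring | rewrite Hpar; unfold p; ring]. }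
assert (EV : V' * n = p * V).
{ transitivity (V * p + U * (U * V' - V * U')); [unfold n, p; ring | rewrite Hpar; unfold p; ring]. }
exists (p / n); split; apply (Rmult_eq_reg_r n); try lra.
- rewrite EU; field; lra.
- rewrite EV; field; lra.
Qed.

(* From c0 (p1 - p0) - c1 u0 + c2 u1 = 0 with c0 <> 0, the lines p0 + R u0 and
   p1 + R u1 meet at p0 + (c1/c0) u0 (one coordinate at a time). *)
Lemma relation_meeting_point (c0 c1 c2 P0 P1 U0 U1 : R) :
  c0 <> 0 -> c0 * (P1 - P0) - c1 * U0 + c2 * U1 = 0 ->
  P0 + c1 / c0 * U0 = P1 + c2 / c0 * U1.
Proof.
intros Hc0 Hrel.
apply (Rmult_eq_reg_l c0); [| exact Hc0].
replace (c0 * (P0 + c1 / c0 * U0)) with (c0 * P0 + c1 * U0) by (field; exact Hc0).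
replace (c0 * (P1 + c2 / c0 * U1)) with (c0 * P1 + c2 * U1) by (field; exact Hc0).
lra.
Qed.

Section TangentLines.
Variables (x y dx dy : R -> R) (s0 s1 s2 : R).
Hypothesis regular0 : dx s0 <> 0 \/ dy s0 <> 0.
Hypothesis regular1 : dx s1 <> 0 \/ dy s1 <> 0.
Hypothesis regular2 : dx s2 <> 0 \/ dy s2 <> 0.

Let r := curve_rows x y dx dy s0 s1 s2.

Lemma rows_relation_iff (c : nat -> R) :
  (forall k, (k < 4)%nat -> comb4 c r k = 0) <->
  c 0%nat * (x s1 - x s0) - c 1%nat * dx s0 + c 2%nat * dx s1 = 0 /\
  c 0%nat * (y s1 - y s0) - c 1%nat * dy s0 + c 2%nat * dy s1 = 0 /\
  c 0%nat * (x s2 - x s0) - c 1%nat * dx s0 + c 3%nat * dx s2 = 0 /\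
  c 0%nat * (y s2 - y s0) - c 1%nat * dy s0 + c 3%nat * dy s2 = 0.
Proof.
unfold r, comb4; simpl. split.
- intros H. repeat split;
    [ generalize (H 0%nat ltac:(lia)) | generalize (H 1%nat ltac:(lia))
    | generalize (H 2%nat ltac:(lia)) | generalize (H 3%nat ltac:(lia)) ]; simpl; lra.
- intros [E0 [E1 [E2 E3]]] k Hk.
  destruct k as [|[|[|[|k]]]]; [| | | | lia]; simpl; lra.
Qed.

Lemma concurrent_rows_dep :
  tangents_concurrent x y dx dy s0 s1 s2 -> dep4 r.
Proof.
intros [px [py [t0 [t1 [t2 [A0 [A1 [A2 [A3 [A4 A5]]]]]]]]]].
exists (fun i => match i with 0%nat => 1 | 1%nat => t0 | 2%nat => t1 | _ => t2 end).
split; [left; simpl; lra |].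
apply rows_relation_iff; simpl; lra.
Qed.

Lemma relation_concurrent (c : nat -> R) :
  c 0%nat <> 0 -> (forall k, (k < 4)%nat -> comb4 c r k = 0) ->
  tangents_concurrent x y dx dy s0 s1 s2.
Proof.
intros Hc0 [E0 [E1 [E2 E3]]]%rows_relation_iff.
exists (x s0 + c 1%nat / c 0%nat * dx s0), (y s0 + c 1%nat / c 0%nat * dy s0),
  (c 1%nat / c 0%nat), (c 2%nat / c 0%nat), (c 3%nat / c 0%nat).
repeat split; apply relation_meeting_point; assumption.
Qed.

Lemma relation_parallel (c : nat -> R) :
  nonzero4 c -> c 0%nat = 0 -> (forall k, (k < 4)%nat -> comb4 c r k = 0) ->
  tangents_parallel dx dy s0 s1 s2.
Proof.
intros Hc Hc0 [E0 [E1 [E2 E3]]]%rows_relation_iff.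
rewrite Hc0 in E0, E1, E2, E3.
assert (F01 : c 1%nat * dx s0 = c 2%nat * dx s1) by lra.
assert (G01 : c 1%nat * dy s0 = c 2%nat * dy s1) by lra.
assert (F02 : c 1%nat * dx s0 = c 3%nat * dx s2) by lra.
assert (G02 : c 1%nat * dy s0 = c 3%nat * dy s2) by lra.
assert (Hc1 : c 1%nat <> 0).
{ destruct Hc as [H | [H | [H | H]]]; [contradiction | exact H | |].
  - exact (proportional_nonzero _ _ _ _ _ _ regular1 H (eq_sym F01) (eq_sym G01)).
  - exact (proportional_nonzero _ _ _ _ _ _ regular2 H (eq_sym F02) (eq_sym G02)). }
assert (Hc2 : c 2%nat <> 0) by exact (proportional_nonzero _ _ _ _ _ _ regular0 Hc1 F01 G01).
split; [| split].
- exact (proportional_parallel _ _ _ _ _ _ Hc1 F01 G01).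
- exact (proportional_parallel _ _ _ _ _ _ Hc1 F02 G02).
- apply (proportional_parallel (c 2%nat) (c 3%nat)); [exact Hc2 | lra | lra].
Qed.

Lemma parallel_rows_dep : tangents_parallel dx dy s0 s1 s2 -> dep4 r.
Proof.
intros [P01 [P02 _]].
destruct (parallel_multiple _ _ _ _ regular0 P01) as [l1 [U1 V1]].
destruct (parallel_multiple _ _ _ _ regular0 P02) as [l2 [U2 V2]].
assert (Hl1 : l1 <> 0) by (intro Z; rewrite Z in U1, V1; destruct regular1; lra).
assert (Hl2 : l2 <> 0) by (intro Z; rewrite Z in U2, V2; destruct regular2; lra).
exists (fun i => match i with 0%nat => 0 | 1%nat => l1 * l2 | 2%nat => l2 | _ => l1 end).
split.
- right; left; simpl. apply Rmult_integral_contrapositive_currified; assumption.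
- apply rows_relation_iff; simpl. rewrite U1, V1, U2, V2. repeat split; ring.
Qed.

Lemma rows_dep_iff_tangents :
  dep4 r <-> tangents_parallel dx dy s0 s1 s2 \/ tangents_concurrent x y dx dy s0 s1 s2.
Proof.
split.
- intros [c [Hc Hrel]].
  destruct (Req_dec (c 0%nat) 0) as [Hc0 | Hc0].
  + left; exact (relation_parallel c Hc Hc0 Hrel).
  + right; exact (relation_concurrent c Hc0 Hrel).
- intros [Hpar | Hconc]; [exact (parallel_rows_dep Hpar) | exact (concurrent_rows_dep Hconc)].
Qed.
End TangentLines.

Theorem proposition2p1 (x y dx dy : R -> R) :
  C1_embedding x y dx dy ->
  forall s0 s1 s2 : R, in_V s0 s1 s2 ->
  forall D : nat -> nat -> R, is_partials x y s0 s1 s2 D ->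
  (critical x y s0 s1 s2 D <->
   tangents_parallel dx dy s0 s1 s2 \/ tangents_concurrent x y dx dy s0 s1 s2).
Proof.
intros [_ [Hder [_ [Hreg Hinj]]]] s0 s1 s2 HV D HP.
pose proof (Gc_sqnorm_pos x y s0 s1 s2 Hinj HV) as Hpos.
rewrite (critical_iff_rows_dependent x y dx dy s0 s1 s2 D Hder Hpos HP).
apply rows_dep_iff_tangents; apply Hreg.
Qed.
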